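(* There are absolute constants $c_1,c_2>0$ such that for infinitely many $n$ there exist integers $b_1,\dots,b_n\ge 0$ with $b_1+\dots+b_n=n-1$ such that $(b_1,\dots,b_n)$-BG has an equilibrium graph in the SUM version whose diameter $d$ satisfies $c_1\log n\le d\le c_2\log n$.
   Context: Bounded budget network creation game $(b_1,\dots,b_n)$-BG: $n$ players with integer budgets $0\le b_i\le n-1$. A strategy of player $i$ is a set $S_i\subseteq\{1,\dots,n\}\setminus\{i\}$ with $|S_i|=b_i$; a profile is realized by the directed graph $G$ on $u_1,\dots,u_n$ with an arc $\overrightarrow{u_iu_j}$ iff $j\in S_i$. $U(G)$ is the undirected multigraph obtained by ignoring directions; $\operatorname{dist}(u,v)$ is the distance in $U(G)$, defined as $n^2$ between different components. SUM cost: $c_{SUM}(u)=\sum_v\operatorname{dist}(u,v)$. An equilibrium graph in the SUM version is a realization in which no vertex can decrease its SUM cost by changing its own strategy while the other strategies are fixed. The diameter is the maximum distance between two vertices. Logarithms are base 2. *)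

From mathcomp Require Import all_boot.
From Stdlib Require Import Reals.

Set Implicit Arguments.
Unset Strict Implicit.
Unset Printing Implicit Defensive.

(* Bounded budget network creation game, SUM version.
   Players/vertices are 'I_n (u_i <-> i).  A strategy profile is
   S : 'I_n -> {set 'I_n}; S i is the set of heads of the arcs bought by i. *)

Section BG.
Variable n : nat.

Definition valid_strategy (b : 'I_n -> nat) (i : 'I_n) (Si : {set 'I_n}) : bool :=
  (i \notin Si) && (#|Si| == b i).

Definition valid_profile (b : 'I_n -> nat) (S : 'I_n -> {set 'I_n}) : Prop :=
  forall i, valid_strategy b i (S i).

Definition adj (S : 'I_n -> {set 'I_n}) (u v : 'I_n) : bool :=
  (v \in S u) || (u \in S v).

Fixpoint ball (S : 'I_n -> {set 'I_n}) (k : nat) (u : 'I_n) : {set 'I_n} :=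
  match k with
  | 0 => [set u]
  | k'.+1 => ball S k' u :|: [set v | [exists w in ball S k' u, adj S w v]]
  end.

(* distance in U(G): the least k with v in ball k u (such a k, if any, is < n);
   n^2 between different components *)
Definition dist (S : 'I_n -> {set 'I_n}) (u v : 'I_n) : nat :=
  let k := find (fun k => v \in ball S k u) (iota 0 n) in
  if k < n then k else n ^ 2.

Definition sum_cost (S : 'I_n -> {set 'I_n}) (u : 'I_n) : nat :=
  \sum_(v : 'I_n) dist S u v.

Definition deviate (S : 'I_n -> {set 'I_n}) (i : 'I_n) (Si : {set 'I_n}) :
  'I_n -> {set 'I_n} := fun j => if j == i then Si else S j.

Definition sum_equilibrium (b : 'I_n -> nat) (S : 'I_n -> {set 'I_n}) : Prop :=
  valid_profile b S /\
  forall (i : 'I_n) (Si : {set 'I_n}), valid_strategy b i Si ->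
    sum_cost S i <= sum_cost (deviate S i Si) i.

Definition diameter (S : 'I_n -> {set 'I_n}) : nat :=
  \max_(u : 'I_n) \max_(v : 'I_n) dist S u v.

End BG.

Definition log2 (x : R) : R := (ln x / ln 2)%R.

(* The equilibrium is the binomial tree on the n = 2^k subsets of {0,...,k-1},
   whose diameter lies between k and 2k: every set buys the edges to its
   children, so the budgets add up to n - 1.  A set A deviating within its
   budget either leaves the subtree of one of its children unreachable (cost
   n^2), or buys exactly one edge into each child subtree.  In the latter case
   distances outside these subtrees do not change, and inside a subtree the
   root is a median (toggling an element above the root's index pairs up its
   vertices), so replacing the root by another vertex cannot help. *)

From mathcomp Require Import all_boot.
From Stdlib Require Import Reals Lra.
(* Reals rebinds [^] on [nat] to [Nat.pow]; re-importing ssrnat makes it [expn] again. *)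
From mathcomp Require Import ssrnat.

Set Implicit Arguments.
Unset Strict Implicit.
Unset Printing Implicit Defensive.

Lemma Nat_powE a b : Nat.pow a b = a ^ b.
Proof. by elim: b => [//|b IH]; rewrite expnS -IH. Qed.

Section GraphDistance.
Variables (n : nat) (S : 'I_n -> {set 'I_n}).
Implicit Types (u v w : 'I_n) (f : 'I_n -> nat).

Definition lipschitz f := forall w v, adj S w v -> f v <= (f w).+1.

Lemma ball_adj k u w v : w \in ball S k u -> adj S w v -> v \in ball S k.+1 u.
Proof. by move=> Hw Hwv; rewrite /= !inE; apply/orP; right; apply/exists_inP; exists w. Qed.

Lemma lipschitz_ball f u k v :
  lipschitz f -> f u = 0 -> v \in ball S k u -> f v <= k.
Proof.
move=> Hf fu; elim: k v => [|k IH] v /=; first by rewrite inE => /eqP->; rewrite fu.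
rewrite !inE => /orP[/IH/leqW//|/exists_inP[w Hw Hwv]].
by apply: leq_trans (Hf _ _ Hwv) _; rewrite ltnS IH.
Qed.

Lemma lipschitz_dist f u v :
  lipschitz f -> f u = 0 -> f v <= n ^ 2 -> f v <= dist S u v.
Proof.
move=> Hf fu fb; rewrite /dist; case: ifP => [Hlt|_]; last by rewrite Nat_powE.
have Hh : has (fun k => v \in ball S k u) (iota 0 n) by rewrite has_find size_iota.
have := nth_find 0 Hh; rewrite nth_iota ?size_iota // add0n.
exact: lipschitz_ball.
Qed.

Lemma dist_ball u v k : v \in ball S k u -> k < n -> dist S u v <= k.
Proof.
move=> Hv Hk; rewrite /dist.
have Hf : find (fun k => v \in ball S k u) (iota 0 n) <= k.
  rewrite leqNgt; apply/negP => Hlt.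
  by have := before_find 0 Hlt; rewrite nth_iota // add0n Hv.
by rewrite (leq_ltn_trans Hf Hk).
Qed.

Lemma dist_unreachable u v : (forall k, v \notin ball S k u) -> dist S u v = n ^ 2.
Proof.
move=> H; rewrite /dist hasNfind ?size_iota ?ltnn ?Nat_powE //.
by apply/hasPn => k _; apply: H.
Qed.

End GraphDistance.

Section SubsetTree.
Variable k : nat.
Local Notation T := {set 'I_k}.
Implicit Types (A B C P Q U V W x : T) (i j m t : 'I_k).

(* The subsets of [0, k) form a binomial tree in which the parent of a nonempty
   set is obtained by deleting its maximum.  The common ancestor of [A] and [B]
   is their common part below the first index where they differ, so [tdist] is
   the tree distance; the descendants of [j |: A] are the sets agreeing with it
   on [0, j], which [subtree A j] describes. *)
Definition below A j := [forall i in A, i < j].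
Definition child A B := [exists j, below A j && (B == j |: A)].
Definition differ_upto A B i := [exists j : 'I_k, (j <= i) && ((j \in A) != (j \in B))].
Definition tdist_term A B i := ((i \in A) + (i \in B)) * differ_upto A B i.
Definition tdist A B := \sum_(i < k) tdist_term A B i.
Definition subtree A j B :=
  [forall i : 'I_k, (i <= j) ==> ((i \in B) == ((i \in A) || (i == j)))].

Lemma differ_uptoC A B i : differ_upto A B i = differ_upto B A i.
Proof. by apply: eq_existsb => j; rewrite eq_sym. Qed.

Lemma differ_uptoP A B i :
  reflect (exists2 j : 'I_k, j <= i & (j \in A) != (j \in B)) (differ_upto A B i).
Proof.
by apply: (iffP existsP) => [[j /andP[]]|[j H1 H2]]; exists j => //; rewrite H1.
Qed.

Lemma differ_uptoN A B i : ~~ differ_upto A B i -> (i \in A) = (i \in B).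
Proof. by move=> H; apply/eqP; apply: contraNT H => H; apply/differ_uptoP; exists i. Qed.

Lemma differ_upto_mono A B i i' : i <= i' -> differ_upto A B i -> differ_upto A B i'.
Proof.
by move=> Hi /differ_uptoP[j Hj Hd]; apply/differ_uptoP; exists j => //; apply: leq_trans Hi.
Qed.

Lemma differ_upto_eqr U V W i :
  (forall j, j <= i -> (j \in W) = (j \in V)) -> differ_upto U W i = differ_upto U V i.
Proof. by move=> H; apply: eq_existsb => j; case: leqP => //= Hj; rewrite H. Qed.

Lemma tdistC A B : tdist A B = tdist B A.
Proof. by apply: eq_bigr => i _; rewrite /tdist_term differ_uptoC addnC. Qed.

Lemma tdistxx A : tdist A A = 0.
Proof.
apply: big1 => i _; rewrite /tdist_term.
by case: differ_uptoP => [[j _]|]; rewrite ?eqxx ?muln0.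
Qed.

Lemma tdist_le A B : tdist A B <= k.*2.
Proof.
apply: (@leq_trans (\sum_(i < k) 2)); last by rewrite sum_nat_const card_ord muln2.
by apply: leq_sum => i _; rewrite /tdist_term; case: (i \in A); case: (i \in B); case: differ_upto.
Qed.

Lemma tdist_term_triangle A B C i : tdist_term A C i <= tdist_term A B i + tdist_term B C i.
Proof.
rewrite /tdist_term; case: (boolP (differ_upto A C i)) => HAC; last by rewrite muln0.
case: (boolP (differ_upto A B i)) => HAB; case: (boolP (differ_upto B C i)) => HBC.
- by rewrite !muln1; case: (i \in A); case: (i \in B); case: (i \in C).
- by rewrite !muln1 muln0 addn0 (differ_uptoN HBC).
- by rewrite !muln1 muln0 add0n (differ_uptoN HAB).
- exfalso; move/differ_uptoP: HAC => [j Hj Hd].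
  move/negP: HAB; apply; apply/differ_uptoP; exists j => //.
  apply: contraNN Hd => /eqP->; apply/eqP.
  by apply: differ_uptoN; apply: contraNN HBC; apply: differ_upto_mono.
Qed.

Lemma tdist_triangle A B C : tdist A C <= tdist A B + tdist B C.
Proof. by rewrite /tdist -big_split; apply: leq_sum => i _; apply: tdist_term_triangle. Qed.

Lemma belowP A j i : below A j -> i \in A -> i < j.
Proof. by move/forall_inP; apply. Qed.

Lemma below_notin A j : below A j -> j \notin A.
Proof. by move=> Hj; apply/negP => /(belowP Hj); rewrite ltnn. Qed.

Lemma childP A B : reflect (exists2 j, below A j & B = j |: A) (child A B).
Proof.
by apply: (iffP existsP) => [[j /andP[H /eqP->]]|[j H ->]]; exists j; rewrite ?H ?eqxx.
Qed.

Lemma tdist_child A B : child A B -> tdist A B = 1.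
Proof.
case/childP => j Hj ->.
have Hterm i : tdist_term A (j |: A) i = (i == j).
  rewrite /tdist_term; have -> : differ_upto A (j |: A) i = (j <= i).
    apply/differ_uptoP/idP => [[p Hp]|Hji]; last first.
      by exists j => //; rewrite in_setU1 eqxx (negbTE (below_notin Hj)).
    by rewrite in_setU1; case: (eqVneq p j) => [<-//|]; rewrite /= eqxx.
  rewrite in_setU1; case: (ltnP i j) => Hij.
    by rewrite muln0; case: eqP => // Eij; rewrite Eij ltnn in Hij.
  have HiA : i \notin A by apply/negP => /(belowP Hj); rewrite ltnNge Hij.
  by rewrite (negbTE HiA) muln1 orbF.
by rewrite /tdist (eq_bigr _ (fun i _ => Hterm i)) (bigD1 j) //= eqxx big1 // => i /negbTE ->.
Qed.

Lemma tdist_child_lipschitz Z P Q :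
  child P Q -> tdist Z Q <= (tdist Z P).+1 /\ tdist Z P <= (tdist Z Q).+1.
Proof.
move=> H; split.
  by apply: leq_trans (tdist_triangle Z P Q) _; rewrite (tdist_child H) addn1.
by apply: leq_trans (tdist_triangle Z Q P) _; rewrite (tdistC Q P) (tdist_child H) addn1.
Qed.

Lemma set_has_max V i : i \in V -> exists2 m, m \in V & forall j, j \in V -> j <= m.
Proof. by move=> Hi; case: (@arg_maxnP _ i (mem V) val Hi) => m; exists m. Qed.

Lemma pred_has_min (P : pred 'I_k) i : P i -> exists2 m, P m & forall j, P j -> m <= j.
Proof. by move=> Hi; case: (@arg_minnP _ i P val Hi) => m; exists m. Qed.

Lemma below_setD1_max V m : (forall j, j \in V -> j <= m) -> below (V :\ m) m.
Proof.
move=> Hmax; apply/forall_inP => j; rewrite in_setD1 => /andP[Hjm HjV].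
by rewrite ltn_neqAle Hmax // andbT; apply: contra Hjm => /eqP/val_inj->.
Qed.

Lemma tdist_setD1_lt U V m : m \in V -> differ_upto U V m ->
  (forall j, j \in V -> j <= m) -> tdist U (V :\ m) < tdist U V.
Proof.
move=> Hm Hdm Hmax.
have Hle i : tdist_term U (V :\ m) i <= tdist_term U V i.
  rewrite /tdist_term; case: (ltnP i m) => Him.
    rewrite (@differ_upto_eqr U V (V :\ m) i); last first.
      move=> j Hj; rewrite in_setD1; case: eqP => // Ejm.
      by rewrite Ejm in Hj; rewrite ltnNge Hj in Him.
    by rewrite in_setD1; case: eqP => //= Eim; rewrite Eim ltnn in Him.
  rewrite (differ_upto_mono Him Hdm) !muln1; case: differ_upto; rewrite ?muln0 ?muln1 //.
  by rewrite leq_add2l in_setD1; case: (_ != _); case: (i \in V).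
rewrite /tdist (bigD1 m) //= [X in _ < X](bigD1 m) //= -addSn.
apply: leq_add; last by apply: leq_sum => i _; apply: Hle.
rewrite /tdist_term Hdm !muln1 Hm in_setD1 eqxx /=.
by case: differ_upto; case: (m \in U).
Qed.

Lemma tdist_setU1_lt U V t : t \in U -> t \notin V ->
  (forall j, j < t -> (j \in U) = (j \in V)) -> tdist U (t |: V) < tdist U V.
Proof.
move=> HtU HtV Hagree.
have HUV : differ_upto U V t by apply/differ_uptoP; exists t; rewrite ?HtU ?(negbTE HtV).
have Hnd i : i <= t -> differ_upto U (t |: V) i = false.
  move=> Hi; apply/negbTE/negP; case/differ_uptoP => j Hj; rewrite in_setU1.
  case: (eqVneq j t) => [->|Hjt]; first by rewrite HtU.
  rewrite /= Hagree ?eqxx //.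
  by rewrite ltn_neqAle (leq_trans Hj Hi) andbT; apply: contra Hjt => /eqP/val_inj->.
have Hle i : tdist_term U (t |: V) i <= tdist_term U V i.
  rewrite /tdist_term; case: (leqP i t) => Hit; first by rewrite Hnd // muln0.
  rewrite (differ_upto_mono (ltnW Hit) HUV) !muln1.
  case: differ_upto; rewrite ?muln0 ?muln1 // leq_add2l in_setU1.
  by case: eqP => [Eit|//]; rewrite Eit ltnn in Hit.
rewrite /tdist (bigD1 t) //= [X in _ < X](bigD1 t) //= -addSn.
apply: leq_add; last by apply: leq_sum => i _; apply: Hle.
by rewrite /tdist_term Hnd // muln0 HUV HtU (negbTE HtV).
Qed.

Lemma tree_neighbor_closer U V : U != V ->
  exists2 W, child W V || child V W & tdist U W < tdist U V.
Proof.
move=> HUV; case: (boolP [exists i in V, differ_upto U V i]).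
  case/exists_inP => i0 Hi0 Hd0; have [m Hm Hmax] := set_has_max Hi0.
  exists (V :\ m); last exact: tdist_setD1_lt (differ_upto_mono (Hmax _ Hi0) Hd0) Hmax.
  by apply/orP; left; apply/childP; exists m; rewrite ?setD1K ?below_setD1_max.
move/exists_inPn => Hno.
have [t0 Ht0] : exists t, (t \in U) != (t \in V).
  apply/existsP; apply: contraNT HUV => /existsPn H.
  by apply/eqP/setP => t; apply/eqP; move: (H t); case: eqP.
have [t Ht Htmin] := @pred_has_min (fun t => (t \in U) != (t \in V)) t0 Ht0.
have HtV : t \notin V.
  by apply/negP => HtV; move/negP: (Hno t HtV); apply; apply/differ_uptoP; exists t.
have HtU : t \in U by move: Ht; rewrite (negbTE HtV); case: (t \in U).
exists (t |: V).
  apply/orP; right; apply/childP; exists t => //; apply/forall_inP => i HiV.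
  rewrite ltnNge; apply/negP => Hti.
  by move/negP: (Hno i HiV); apply; apply/differ_uptoP; exists t.
apply: tdist_setU1_lt => // j Hj; apply/eqP.
by apply: contraTT Hj => Hd; rewrite -leqNgt; exact: Htmin.
Qed.

Lemma subtreeP A j B :
  reflect (forall i, i <= j -> (i \in B) = (i \in A) || (i == j)) (subtree A j B).
Proof.
apply: (iffP forallP) => H i; first by move=> Hi; move: (H i); rewrite Hi => /eqP.
by apply/implyP => Hi; rewrite H.
Qed.

Lemma subtree_root A j : subtree A j (j |: A).
Proof. by apply/subtreeP => i _; rewrite in_setU1 orbC. Qed.

Lemma subtreeNself A j : below A j -> ~~ subtree A j A.
Proof.
move=> Hj; apply/negP => /subtreeP /(_ j (leqnn _)).
by rewrite eqxx orbT (negbTE (below_notin Hj)).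
Qed.

Lemma subtree_disjoint A j j' B :
  below A j -> below A j' -> subtree A j B -> subtree A j' B -> j = j'.
Proof.
wlog Hjj' : j j' / j <= j'.
  move=> W H1 H2 H3 H4; case: (leqP j j') => Hl; first exact: W.
  by apply/esym/W => //; apply: ltnW.
move=> Hj Hj' /subtreeP H1 /subtreeP H2.
move: (H1 j (leqnn _)) (H2 j Hjj'); rewrite eqxx orbT => ->.
by rewrite (negbTE (below_notin Hj)) /=; case: eqP.
Qed.

Lemma subtree_child A j P Q :
  below A j -> child P Q -> P != A -> subtree A j P = subtree A j Q.
Proof.
move=> Hj /childP [m Hm ->] HPA; case: (ltnP j m) => Hjm.
  apply: eq_forallb => i; case: (leqP i j) => //= Hij.
  rewrite in_setU1; case: (eqVneq i m) => [Eim|] //=.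
  by move: Hij; rewrite Eim leqNgt Hjm.
have HP : ~~ subtree A j P.
  apply/negP => /subtreeP /(_ j (leqnn _)); rewrite eqxx orbT => /(belowP Hm).
  by rewrite ltnNge Hjm.
rewrite (negbTE HP); apply/esym/negP => /subtreeP H; move/negP: HPA; apply.
apply/eqP/setP => i; apply/idP/idP => Hi.
  have Him := belowP Hm Hi.
  move: (H i (leq_trans (ltnW Him) Hjm)); rewrite in_setU1 Hi orbT => /esym.
  case: (eqVneq i j) => [Eij|]; last by rewrite orbF.
  by rewrite Eij ltnNge Hjm in Him.
have Hij := belowP Hj Hi.
move: (H i (ltnW Hij)); rewrite Hi /= in_setU1.
case: (eqVneq i m) => [Eim|] //= _.
move: (H j (leqnn _)); rewrite eqxx orbT in_setU1.
case: (eqVneq j m) => [Ejm|_] /=; first by rewrite Eim -Ejm ltnn in Hij.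
by move/(belowP Hm); rewrite ltnNge Hjm.
Qed.

Lemma child_max P B j : below P j -> B = j |: P -> forall i, i \in B -> i <= j.
Proof. by move=> Hj -> i; rewrite in_setU1; case: eqP => [->//|_] /= /(belowP Hj)/ltnW. Qed.

Lemma child_inj P P' B : child P B -> child P' B -> P = P'.
Proof.
move=> /childP[j Hj EB] /childP[j' Hj' EB'].
have Ejj : j = j'.
  apply/val_inj/eqP; rewrite eqn_leq (child_max Hj' EB') ?(child_max Hj EB) //.
    by rewrite EB' setU11.
  by rewrite EB setU11.
subst j'; apply/setP => i.
case: (eqVneq i j) => [->|Hij].
  by rewrite (negbTE (below_notin Hj)) (negbTE (below_notin Hj')).
by move/setP/(_ i): (etrans (esym EB) EB'); rewrite !in_setU1 (negbTE Hij).
Qed.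

Lemma child_exists B : B != set0 -> exists P, child P B.
Proof.
case/set0Pn => x Hx; have [m Hm Hmax] := set_has_max Hx.
by exists (B :\ m); apply/childP; exists m; rewrite ?setD1K ?below_setD1_max.
Qed.

Lemma childN0 P : ~~ child P set0.
Proof. by apply/negP => /childP[j _ E]; move: (setU11 j P); rewrite -E inE. Qed.

Lemma childNxx P : ~~ child P P.
Proof.
apply/negP => /childP[j Hj E]; move: (setU11 j P); rewrite -E.
by rewrite (negbTE (below_notin Hj)).
Qed.

Lemma below_setU1_inj A j j' : below A j -> j |: A = j' |: A -> j = j'.
Proof.
move=> Hj E; move: (setU11 j A); rewrite E in_setU1 (negbTE (below_notin Hj)) orbF.
by move/eqP.
Qed.

Definition toggle i B := if i \in B then B :\ i else i |: B.

Lemma in_toggle i j B : (j \in toggle i B) = if j == i then i \notin B else j \in B.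
Proof.
rewrite /toggle; case: (eqVneq j i) => [->|Hji]; case: (boolP (i \in B)) => HiB.
- by rewrite in_setD1 eqxx.
- by rewrite setU11.
- by rewrite in_setD1 Hji.
- by rewrite in_setU1 (negbTE Hji).
Qed.

Lemma toggleK i : involutive (toggle i).
Proof.
move=> B; apply/setP => j; rewrite !in_toggle.
by case: (eqVneq j i) => [->|//]; rewrite eqxx negbK.
Qed.

(* Coordinatewise: above [j], toggling [i] pairs the vertices of the
   subtree; on each pair the root contributes at most 1 and any [x] at least 1. *)
Lemma subtree_root_median A j x : below A j -> subtree A j x ->
  \sum_(B | subtree A j B) tdist (j |: A) B <= \sum_(B | subtree A j B) tdist x B.
Proof.
move=> Hj Hx; rewrite /tdist exchange_big [X in _ <= X]exchange_big /=.
apply: leq_sum => i _; case: (leqP i j) => Hij.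
  rewrite big1 // => B /subtreeP HB; rewrite /tdist_term.
  have -> : differ_upto (j |: A) B i = false.
    apply/negbTE/negP; case/differ_uptoP => p Hp.
    by rewrite in_setU1 HB ?(leq_trans Hp Hij) // orbC eqxx.
  by rewrite muln0.
set L := fun B => tdist_term (j |: A) B i.
set R := fun B => tdist_term x B i.
have HiA : i \notin j |: A.
  rewrite in_setU1; apply/norP; split.
    by apply/negP => /eqP Eij; rewrite Eij ltnn in Hij.
  by apply/negP => /(belowP Hj) Hi; move: (ltn_trans Hi Hij); rewrite ltnn.
have HR C : (i \in C) != (i \in x) -> 0 < R C.
  move=> HC; rewrite /R /tdist_term.
  have -> : differ_upto x C i by apply/differ_uptoP; exists i; rewrite // eq_sym.
  by move: HC; case: (i \in C); case: (i \in x).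
have Hpair B : L B + L (toggle i B) <= R B + R (toggle i B).
  apply: (@leq_trans 1).
    rewrite /L /tdist_term (negbTE HiA) !add0n in_toggle eqxx.
    by case: (i \in B); case: differ_upto; case: differ_upto.
  case: (boolP ((i \in B) != (i \in x))) => HB.
    exact: leq_trans (HR _ HB) (leq_addr _ _).
  have : (i \in toggle i B) != (i \in x).
    by rewrite in_toggle eqxx; move: HB; case: (i \in B); case: (i \in x).
  by move/HR/leq_trans; apply; apply: leq_addl.
have Htoggle (F : T -> nat) :
    \sum_(B | subtree A j B) F B = \sum_(B | subtree A j B) F (toggle i B).
  rewrite (reindex_inj (can_inj (toggleK i))) /=.
  apply: eq_bigl => B; apply/subtreeP/subtreeP => H p Hp; move: (H p Hp); rewrite in_toggle;
    by case: (eqVneq p i) => [Epi|//]; move: Hp; rewrite Epi leqNgt Hij.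
rewrite -(leq_pmul2l (isT : 0 < 2)) !mul2n -!addnn.
rewrite [X in X + _ <= _]Htoggle [X in _ <= X + _]Htoggle -!big_split /=.
by apply: leq_sum => B _; rewrite addnC [X in _ <= X]addnC; apply: Hpair.
Qed.

End SubsetTree.

Lemma sum_disjoint_blocks (I T : finType) (J : {set I}) (D : I -> {set T}) (h : T -> nat) :
  (forall j j' v, j \in J -> j' \in J -> v \in D j -> v \in D j' -> j = j') ->
  \sum_v h v = \sum_(v | ~~ [exists j in J, v \in D j]) h v + \sum_(j in J) \sum_(v in D j) h v.
Proof.
move=> Hdisj; rewrite addnC (bigID (fun v => [exists j in J, v \in D j])) /=; congr (_ + _).
rewrite (eq_bigr (fun j => \sum_v (v \in D j) * h v)); last first.
  by move=> j _; rewrite big_mkcond; apply: eq_bigr => v _; case: (v \in D j); rewrite ?mul1n.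
rewrite exchange_big /= big_mkcond; apply: eq_bigr => v _.
case: (boolP [exists j in J, v \in D j]) => [/exists_inP[j Hj Hv]|/exists_inPn Hn].
  rewrite (bigD1 j) //= Hv mul1n big1 ?addn0 // => j' /andP[Hj' Hjj'].
  case: (boolP (v \in D j')) => Hv'; last by rewrite mul0n.
  by move: Hjj'; rewrite (Hdisj j' j v) ?eqxx.
by rewrite big1 // => j Hj; rewrite (negbTE (Hn j Hj)).
Qed.

Section TreeProfile.
Variable k : nat.
Local Notation T := {set 'I_k}.
Local Notation n := #|{set 'I_k}|.
Local Notation V := 'I_#|{set 'I_k}|.
Implicit Types (u v w : V).

Definition label v : T := enum_val v.
Definition tree_profile v : {set V} := [set w | child (label v) (label w)].
Definition tree_budget v := #|tree_profile v|.

Lemma label_inj : injective label. Proof. exact: enum_val_inj. Qed.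
Lemma labelK B : label (enum_rank B) = B. Proof. exact: enum_rankK. Qed.

Lemma in_tree_profile v w : (w \in tree_profile v) = child (label v) (label w).
Proof. by rewrite inE. Qed.

Lemma card_vertices : n = 2 ^ k.
Proof. by rewrite -cardsT -powersetT card_powerset cardsT card_ord. Qed.

Lemma adj_tree_profile w v :
  adj tree_profile w v = child (label w) (label v) || child (label v) (label w).
Proof. by rewrite /adj !in_tree_profile. Qed.

Lemma tdist_lipschitz Z : lipschitz tree_profile (fun v => tdist Z (label v)).
Proof.
by move=> w v; rewrite adj_tree_profile => /orP[] /(tdist_child_lipschitz Z)[].
Qed.

Lemma ball_tdist u v : v \in ball tree_profile (tdist (label u) (label v)) u.
Proof.
move: {2}(tdist (label u) (label v)) (leqnn (tdist (label u) (label v))) => m.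
elim: m v => [|m IH] v Hv; case: (eqVneq (label u) (label v)) => [/label_inj->|Hne].
- by rewrite tdistxx /= set11.
- have [W _] := tree_neighbor_closer Hne; by move: Hv; rewrite leqn0 => /eqP->.
- by rewrite tdistxx /= set11.
have [W HW Hlt] := tree_neighbor_closer Hne; set w := enum_rank W.
have Ha : adj tree_profile w v by rewrite adj_tree_profile /w labelK.
have Hw : w \in ball tree_profile (tdist (label u) (label w)) u.
  by apply: IH; rewrite /w labelK -ltnS (leq_trans Hlt Hv).
have -> : tdist (label u) (label v) = (tdist (label u) (label w)).+1.
  by apply/eqP; rewrite eqn_leq (tdist_lipschitz (label u) Ha) /w labelK Hlt.
exact: ball_adj Hw Ha.
Qed.

Lemma sum_label (P : pred T) (F : T -> nat) :
  \sum_(v | P (label v)) F (label v) = \sum_(B | P B) F B.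
Proof. by rewrite (big_enum_val_cond (op := addn) (A := T)). Qed.

Lemma tree_budget_le v : tree_budget v <= n.-1.
Proof.
apply: (@leq_trans #|[set~ v]|); last by rewrite cardsC1 card_ord.
apply: subset_leq_card; apply/subsetP => w.
rewrite in_tree_profile !inE; apply: contraTneq => ->; exact: childNxx.
Qed.

(* Every vertex except the root [set0] has exactly one parent. *)
Lemma sum_tree_budget : \sum_(v < n) tree_budget v = n.-1.
Proof.
have -> : \sum_(v < n) tree_budget v = \sum_w \sum_v (child (label v) (label w) : nat).
  rewrite exchange_big /=; apply: eq_bigr => v _.
  by rewrite /tree_budget -sum1_card big_mkcond; apply: eq_bigr => w _; rewrite in_tree_profile.
rewrite -[in RHS](card_ord n) -(cardsC1 (enum_rank set0)) -sum1_card [RHS]big_mkcond /=.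
apply: eq_bigr => w _; rewrite !inE.
case: (eqVneq w (enum_rank set0)) => [->|Hw] /=.
  by rewrite big1 // => v _; rewrite labelK (negbTE (childN0 _)).
have [P HP] : exists P, child P (label w).
  by apply: child_exists; apply: contra Hw => /eqP<-; rewrite /label enum_valK.
rewrite (bigD1 (enum_rank P)) //= labelK HP big1 // => v Hv.
case: (boolP (child (label v) (label w))) => // Hc.
have Ev : v = enum_rank P by apply: label_inj; rewrite labelK (child_inj Hc HP).
by rewrite Ev eqxx in Hv.
Qed.

Hypothesis k_ge3 : 3 <= k.

Lemma double_lt_card : k.*2 < n.
Proof.
rewrite card_vertices; case: k k_ge3 => [|[|[|m]]] // _.
elim: m => [//|m IH]; rewrite [2 ^ _]expnS mul2n ltn_double.
by apply: leq_ltn_trans IH; rewrite -addnn !addSn !addnS !ltnS !leqW // leq_addr.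
Qed.

Lemma double_lt_sq : k.*2 < n ^ 2.
Proof.
apply: leq_trans double_lt_card _; rewrite expnS expn1 leq_pmulr //.
exact: leq_ltn_trans (leq0n _) double_lt_card.
Qed.

Lemma dist_tree_profile u v : dist tree_profile u v = tdist (label u) (label v).
Proof.
apply/eqP; rewrite eqn_leq; apply/andP; split.
  exact: dist_ball (ball_tdist u v) (leq_ltn_trans (tdist_le _ _) double_lt_card).
apply: (@lipschitz_dist _ _ (fun w => tdist (label u) (label w))).
- exact: tdist_lipschitz.
- exact: tdistxx.
- exact: leq_trans (tdist_le _ _) (ltnW double_lt_sq).
Qed.

Lemma sum_cost_tree_profile u : sum_cost tree_profile u = \sum_v tdist (label u) (label v).
Proof. by apply: eq_bigr => v _; rewrite dist_tree_profile. Qed.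

Lemma sum_cost_tree_profile_lt u : sum_cost tree_profile u < n ^ 2.
Proof.
rewrite sum_cost_tree_profile; apply: (@leq_ltn_trans (\sum_(v : V) k.*2)).
  by apply: leq_sum => v _; apply: tdist_le.
by rewrite sum_nat_const card_ord expnS expn1 ltn_pmul2l // (leq_ltn_trans _ double_lt_card).
Qed.

Lemma tree_profile_diameter_ge : k <= diameter tree_profile.
Proof.
apply: leq_trans (leq_bigmax (enum_rank set0)); apply: leq_trans (leq_bigmax (enum_rank setT)).
rewrite dist_tree_profile !labelK /tdist (eq_bigr (fun _ => 1)) ?sum1_card ?card_ord // => i _.
have Hd : differ_upto set0 setT i by apply/differ_uptoP; exists i; rewrite ?inE.
by rewrite /tdist_term Hd inE in_setT.
Qed.

Lemma tree_profile_diameter_le : diameter tree_profile <= k.*2.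
Proof.
apply/bigmax_leqP => u _; apply/bigmax_leqP => v _.
by rewrite dist_tree_profile tdist_le.
Qed.


Section Deviation.
Variables (u : V) (Si : {set V}).
Hypothesis Si_valid : valid_strategy tree_budget u Si.
Local Notation A := (label u).
Local Notation S' := (deviate tree_profile u Si).

Definition subtree_at j : {set V} := [set v | subtree (label u) j (label v)].

Lemma in_deviate p q :
  (q \in S' p) = if p == u then q \in Si else child (label p) (label q).
Proof. by rewrite /deviate; case: eqP; rewrite ?in_tree_profile. Qed.

Lemma deviate_edge_subtree j p q : below A j -> p != u -> q \in S' p ->
  (p \in subtree_at j) = (q \in subtree_at j).
Proof.
move=> Hj Hpu; rewrite in_deviate (negbTE Hpu) !inE => Hc.
by apply: subtree_child => //; apply: contra Hpu => /eqP/label_inj->.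
Qed.

Lemma root_notin_subtree_at j : below A j -> u \notin subtree_at j.
Proof. by rewrite inE; apply: subtreeNself. Qed.

Lemma subtree_at_disjoint j j' v : below A j -> below A j' ->
  v \in subtree_at j -> v \in subtree_at j' -> j = j'.
Proof. by rewrite !inE; apply: subtree_disjoint. Qed.

Lemma card_tree_profile_root : #|tree_profile u| = #|[set j | below A j]|.
Proof.
have -> : tree_profile u = [set enum_rank (j |: A) | j in [set j | below A j]].
  apply/setP => w; rewrite in_tree_profile; apply/childP/imsetP => [[j Hj Ew]|[j]].
    by exists j; rewrite ?inE //; apply: label_inj; rewrite labelK -Ew.
  by rewrite inE => Hj ->; exists j; rewrite ?labelK.
apply: card_in_imset => j j'; rewrite !inE => Hj _ /(congr1 label).
by rewrite !labelK; apply: below_setU1_inj.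
Qed.

Lemma deviate_ball_outside j m v : below A j -> {in Si, forall x, x \notin subtree_at j} ->
  v \in ball S' m u -> v \notin subtree_at j.
Proof.
move=> Hj Hno; elim: m v => [|m IH] v /=.
  by rewrite inE => /eqP->; apply: root_notin_subtree_at.
case/setUP => [/IH//|]; rewrite [in X in X -> _]inE => /exists_inP[w /IH Hw Hadj].
case/orP: Hadj => Hwv.
  case: (eqVneq w u) => [Ewu|Hwu]; last by rewrite -(deviate_edge_subtree Hj Hwu Hwv).
  by apply: Hno; rewrite in_deviate Ewu eqxx in Hwv.
case: (eqVneq v u) => [->|Hvu]; first exact: root_notin_subtree_at.
by rewrite (deviate_edge_subtree Hj Hvu Hwv).
Qed.

Lemma deviate_cut_cost j : below A j -> {in Si, forall x, x \notin subtree_at j} ->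
  sum_cost tree_profile u <= sum_cost S' u.
Proof.
move=> Hj Hno; set c := enum_rank (j |: A).
have Hc : dist S' u c = n ^ 2.
  apply: dist_unreachable => m; apply/negP => /(deviate_ball_outside Hj Hno).
  by rewrite inE labelK subtree_root.
apply: leq_trans (ltnW (sum_cost_tree_profile_lt u)) _.
by rewrite /sum_cost (bigD1 c) //= Hc leq_addr.
Qed.

Lemma subtree_cost_le j x : below A j -> x \in subtree_at j ->
  \sum_(v in subtree_at j) tdist A (label v)
    <= \sum_(v in subtree_at j) (tdist (label x) (label v)).+1.
Proof.
move=> Hj Hx.
apply: (@leq_trans (\sum_(v in subtree_at j) (tdist (j |: A) (label v)).+1)).
  apply: leq_sum => v _; apply: leq_trans (tdist_triangle A (j |: A) (label v)) _.
  by rewrite tdist_child ?add1n //; apply/childP; exists j.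
rewrite -!(eq_bigr _ (fun v _ => addn1 _)) !big_split /= leq_add2r.
rewrite (eq_bigl (fun v => subtree A j (label v))); last by move=> v; rewrite inE.
rewrite [X in _ <= X](eq_bigl (fun v => subtree A j (label v))); last by move=> v; rewrite inE.
by rewrite !sum_label; apply: subtree_root_median; rewrite // inE in Hx.
Qed.

Section SubtreesMet.
Hypothesis Si_meets : forall j, below A j -> exists2 x, x \in Si & x \in subtree_at j.

Definition rep j := odflt u [pick x in Si | x \in subtree_at j].

Lemma rep_spec j : below A j -> rep j \in Si /\ rep j \in subtree_at j.
Proof.
move=> Hj; rewrite /rep; case: pickP => [x /andP[]//|Hn] /=.
by case: (Si_meets Hj) => x H1 H2; move: (Hn x); rewrite H1 H2.
Qed.

(* [Si] has as many elements as there are subtrees and meets each of them. *)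
Lemma deviate_reps : Si = rep @: [set j | below A j].
Proof.
apply/esym/eqP; rewrite eqEcard; apply/andP; split.
  by apply/subsetP => x /imsetP[j]; rewrite inE => Hj ->; case: (rep_spec Hj).
case/andP: Si_valid => _ /eqP->; rewrite /tree_budget card_tree_profile_root card_in_imset //.
move=> j j'; rewrite !inE => Hj Hj' E.
apply: (@subtree_at_disjoint _ _ (rep j)) => //; first by case: (rep_spec Hj).
by rewrite E; case: (rep_spec Hj').
Qed.

(* A lower bound for [dist S' u]: inside the subtree met at [rep j], distances
   are measured from [rep j], elsewhere they are the old ones. *)
Definition potential v :=
  if [pick j | below A j && (v \in subtree_at j)] is Some j
  then (tdist (label (rep j)) (label v)).+1 else tdist A (label v).

Lemma potential_in j v : below A j -> v \in subtree_at j ->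
  potential v = (tdist (label (rep j)) (label v)).+1.
Proof.
move=> Hj Hv; rewrite /potential; case: pickP => [j' /andP[Hj' Hv']|/(_ j)].
  by rewrite (subtree_at_disjoint Hj' Hj Hv' Hv).
by rewrite Hj Hv.
Qed.

Lemma potential_out v : (forall j, below A j -> v \notin subtree_at j) ->
  potential v = tdist A (label v).
Proof.
move=> Hv; rewrite /potential; case: pickP => [j /andP[Hj]|//].
by rewrite (negbTE (Hv j Hj)).
Qed.

Lemma potential_root : potential u = 0.
Proof. by rewrite potential_out ?tdistxx // => j; apply: root_notin_subtree_at. Qed.

Lemma potential_lipschitz : lipschitz S' potential.
Proof.
have Hedge p q : q \in S' p ->
    potential q <= (potential p).+1 /\ potential p <= (potential q).+1.
  case: (eqVneq p u) => [->|Hpu Hpq].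
    rewrite in_deviate eqxx deviate_reps => /imsetP[j]; rewrite inE => Hj ->.
    by rewrite potential_root (potential_in Hj (proj2 (rep_spec Hj))) tdistxx.
  have Hc : child (label p) (label q) by rewrite in_deviate (negbTE Hpu) in Hpq.
  case: (boolP [exists j, below A j && (p \in subtree_at j)]).
    case/existsP => j /andP[Hj Hp].
    have Hq : q \in subtree_at j by rewrite -(deviate_edge_subtree Hj Hpu Hpq).
    by rewrite (potential_in Hj Hp) (potential_in Hj Hq) !ltnS; apply: tdist_child_lipschitz.
  move/existsPn => Hn; have Hp j : below A j -> p \notin subtree_at j.
    by move=> Hj; move: (Hn j); rewrite Hj.
  rewrite !potential_out //; first exact: tdist_child_lipschitz.
  by move=> j Hj; rewrite -(deviate_edge_subtree Hj Hpu Hpq) Hp.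
by move=> w v /orP[/Hedge[]|/Hedge[]].
Qed.

Lemma potential_le_dist v : potential v <= dist S' u v.
Proof.
apply: lipschitz_dist; [exact: potential_lipschitz|exact: potential_root|].
apply: leq_trans double_lt_sq; rewrite /potential; case: pickP => [j _|_].
  by rewrite ltnS tdist_le.
exact: leq_trans (tdist_le _ _) (leqnSn _).
Qed.

Lemma deviate_connected_cost : sum_cost tree_profile u <= sum_cost S' u.
Proof.
apply: (@leq_trans (\sum_v potential v)); last by apply: leq_sum => v _; apply: potential_le_dist.
have Hdisj j j' v : j \in [set j | below A j] -> j' \in [set j | below A j] ->
    v \in subtree_at j -> v \in subtree_at j' -> j = j'.
  by rewrite !inE; apply: subtree_disjoint.
rewrite sum_cost_tree_profile !(sum_disjoint_blocks _ Hdisj); apply: leq_add.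
  rewrite leq_eqVlt; apply/orP; left; apply/eqP; apply: eq_bigr => v /exists_inPn Hn.
  by rewrite potential_out // => j Hj; apply: Hn; rewrite inE.
apply: leq_sum => j; rewrite inE => Hj.
rewrite [X in _ <= X](eq_bigr (fun v => (tdist (label (rep j)) (label v)).+1)).
  by apply: subtree_cost_le => //; case: (rep_spec Hj).
by move=> v; apply: potential_in.
Qed.

End SubtreesMet.

Lemma deviation_no_gain : sum_cost tree_profile u <= sum_cost S' u.
Proof.
case: (boolP [forall j, below A j ==> [exists x in Si, x \in subtree_at j]]).
  move/forallP => Hall; apply: deviate_connected_cost => j Hj.
  by case/implyP/(_ Hj)/exists_inP: (Hall j) => x; exists x.
by case/forallPn => j; rewrite negb_imply => /andP[Hj /exists_inPn]; apply: deviate_cut_cost.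
Qed.

End Deviation.

Lemma tree_profile_equilibrium : sum_equilibrium tree_budget tree_profile.
Proof.
split=> [v|u Si HSi]; last exact: deviation_no_gain.
by rewrite /valid_strategy in_tree_profile childNxx eqxx.
Qed.

End TreeProfile.

Section Log2.
Local Open Scope R_scope.

Lemma log2_pow2 k : log2 (INR (2 ^ k)%N) = INR k.
Proof.
have ln2_pos : 0 < ln 2 by move: ln_lt_2; lra.
have INR2 : INR 2 = 2 by rewrite /=; lra.
rewrite /log2 -Nat_powE pow_INR INR2 ln_pow; last lra.
by field; lra.
Qed.

End Log2.

Theorem mainTheorem5 :
  exists c1 c2 : R, (0 < c1)%R /\ (0 < c2)%R /\
    forall N : nat, exists n : nat, (N <= n)%N /\
      exists b : 'I_n -> nat,
        (forall i, (b i <= n.-1)%N) /\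
        (\sum_(i < n) b i)%N = n.-1 /\
        exists S : 'I_n -> {set 'I_n},
          sum_equilibrium b S /\
          (c1 * log2 (INR n) <= INR (diameter S))%R /\
          (INR (diameter S) <= c2 * log2 (INR n))%R.
Proof.
exists 1%R, 2%R; split; first lra; split; first lra.
move=> N; pose k := N.+3; exists #|{set 'I_k}|; split.
  by rewrite card_vertices; apply: leq_trans (ltnW (ltn_expl k (isT : 1 < 2))); rewrite leqW ?leqW.
exists (@tree_budget k); split; first exact: tree_budget_le.
split; first exact: sum_tree_budget.
exists (@tree_profile k); split; first exact: tree_profile_equilibrium.
have -> : log2 (INR #|{set 'I_k}|) = INR k by rewrite card_vertices log2_pow2.
rewrite Rmult_1_l; split.
  by apply/le_INR/leP/tree_profile_diameter_ge.
apply: (Rle_trans _ (INR k.*2)); first by apply/le_INR/leP/tree_profile_diameter_le.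
by rewrite -mul2n mult_INR /=; lra.
Qed.
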